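(* Consider the $K$-class stochastic block model on $n$ nodes (labels $Z_i$ i.i.d. with probability vector $\pi$; given $Z$, $A_{ij}=A_{ji}$, $i<j$, independent Bernoulli$(P_{Z_iZ_j})$, $A_{ii}=0$, $P$ symmetric with entries in $[0,1]$). For any $x>0$, $$\Pr\Big(\max_{e\in\{1,\dots,K\}^n}\big\|\widetilde O(e)-\mathbb E(\widetilde O(e)\mid Z)\big\|_\infty>xn^2\Big)\le2K^{n+2}e^{-x^2n^2/(8\|P\|_\infty+4x/3)}.$$
   Context: For a labelling $e$, $O_{ab}(e)=\sum_{i,j}A_{ij}1\{e_i=a,e_j=b\}$ for $a\ne b$ and $O_{aa}(e)=\sum_{i<j}A_{ij}1\{e_i=e_j=a\}$; $\widetilde O_{ab}(e)=O_{ab}(e)$ for $a\ne b$ and $\widetilde O_{aa}(e)=2O_{aa}(e)$; $\widetilde O(e)$ is the $K\times K$ matrix of these. For a matrix $M$, $\|M\|_\infty=\max_{a,b}|M_{ab}|$. *)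

From HB Require Import structures.
From mathcomp Require Import all_boot all_order all_algebra.
From mathcomp Require Import reals sequences exp.
Set Implicit Arguments. Unset Strict Implicit. Unset Printing Implicit Defensive.
Import Order.TTheory GRing.Theory Num.Theory.
Local Open Scope ring_scope.

(* Sample space: labels Z : 'I_n -> 'I_K and edge indicators B(i,j);
   only entries with i < j are random, the others are a.s. false. *)
Definition Omega (n K : nat) : finType :=
  ({ffun 'I_n -> 'I_K} * {ffun 'I_n * 'I_n -> bool})%type.

Definition adj (R : realType) (n K : nat) (w : Omega n K) (i j : 'I_n) : R :=
  if (i < j)%N then (w.2 (i, j))%:R
  else if (j < i)%N then (w.2 (j, i))%:R else 0.

Definition sbm_mass (R : realType) (n K : nat) (pi : 'I_K -> R)
    (P : 'I_K -> 'I_K -> R) (w : Omega n K) : R :=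
  (\prod_(i : 'I_n) pi (w.1 i)) *
  \prod_(p : 'I_n * 'I_n)
     (if (p.1 < p.2)%N then
        (if w.2 p then P (w.1 p.1) (w.1 p.2) else 1 - P (w.1 p.1) (w.1 p.2))
      else (if w.2 p then 0 else 1)).

Definition prob (R : realType) (T : finType) (mass : T -> R) (E : pred T) : R :=
  \sum_(w | E w) mass w.

Definition condexpZ (R : realType) (n K : nat) (mass : Omega n K -> R)
    (X : Omega n K -> R) (w : Omega n K) : R :=
  (\sum_(w' | w'.1 == w.1) mass w' * X w') / (\sum_(w' | w'.1 == w.1) mass w').

Definition Ocount (R : realType) (n K : nat) (e : {ffun 'I_n -> 'I_K})
    (w : Omega n K) (a b : 'I_K) : R :=
  if a != b then
    \sum_(i : 'I_n) \sum_(j : 'I_n) adj R w i j * ((e i == a) && (e j == b))%:R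
  else
    \sum_(i : 'I_n) \sum_(j : 'I_n | (i < j)%N) adj R w i j * ((e i == a) && (e j == a))%:R.

Definition Otilde (R : realType) (n K : nat) (e : {ffun 'I_n -> 'I_K})
    (w : Omega n K) (a b : 'I_K) : R :=
  if a == b then 2 * Ocount R e w a a else Ocount R e w a b.

Definition supnorm (R : realType) (K : nat) (M : 'I_K -> 'I_K -> R) : R :=
  \big[Num.max/0]_(a : 'I_K) \big[Num.max/0]_(b : 'I_K) `|M a b|.

From HB Require Import structures.
From mathcomp Require Import all_boot all_order all_algebra.
From mathcomp Require Import reals sequences exp.
From mathcomp Require Import ring lra.
Import Order.TTheory GRing.Theory Num.Theory.
Set Implicit Arguments.
Unset Strict Implicit.
Unset Printing Implicit Defensive.
Local Open Scope ring_scope.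

(* Given the labels z, each entry of [Otilde e - E(Otilde e | Z)] is a sum over the pairs
   i < j of independent centred terms c_ij (A_ij - P_{z_i z_j}) with 0 <= c_ij <= 2.
   Chernoff's bound with parameter l, together with e^mu - 1 - mu <= psi (2 l) for
   |mu| <= 2 l, bounds each one-sided tail at t = x n^2 by
   exp (- l t + psi (2 l) sum_{i<j} P_{z_i z_j}); since the sum is at most ||P|| n^2 / 2,
   the choice l = x / (x + 3 ||P||) makes this at most exp (- x^2 n^2 / (8 ||P|| + 4 x / 3)).
   A union bound over the K^n labellings e, the K^2 entries and the two signs gives the
   factor 2 K^(n+2). *)

Section ExpBounds.
Variable R : realType.
Implicit Types (u w mu : R).

(* Raising [expR (mu / 4) <= (1 - mu / 4)^-1] to the fourth power gives
   [expR mu - 1 - mu <= psi u] for [|mu| <= u < 4]; [psi] stands in for the usual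
   Bernstein bound mu^2 / (2 (1 - |mu| / 3)), whose proof needs the power series of [expR]. *)
Definition psi u : R := (1 - u / 4)^-1 ^+ 4 - 1 - u.

Lemma expR_le_inv1B w : w < 1 -> expR w <= (1 - w)^-1.
Proof.
move=> w_lt1; have := expR_ge1Dx (- w); rewrite expRN => le1w.
by rewrite -[expR w]invrK lef_pV2 ?posrE ?invr_gt0 ?expR_gt0 //; lra.
Qed.

Lemma expRN_le_inv1D w : 0 <= w -> expR (- w) <= (1 + w)^-1.
Proof.
move=> w_ge0; have := expR_ge1Dx w.
by rewrite expRN lef_pV2 ?posrE ?expR_gt0 //; lra.
Qed.

Lemma psi_homo u u' : 0 <= u -> u <= u' -> u' < 4 -> psi u <= psi u'.
Proof.
move=> u_ge0 le_uu' u'_lt4; rewrite /psi.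
set y := 1 - u / 4; set z := 1 - u' / 4.
have z_gt0 : 0 < z by rewrite /z; lra.
have y_gt0 : 0 < y by rewrite /y; lra.
set A := y^-1; set B := z^-1.
have yA : A * y = 1 by rewrite mulVf ?gt_eqF.
have zB : B * z = 1 by rewrite mulVf ?gt_eqF.
have A_ge1 : 1 <= A by rewrite invr_ge1 ?unitf_gt0 // /y; lra.
have le_AB : A <= B by rewrite lef_pV2 ?posrE // /y /z; lra.
(* y - z = (B - A) y z <= B - A, while B^4 - A^4 = (B - A)(B^3 + B^2 A + B A^2 + A^3) >= 4 (B - A). *)
have yz : y - z = (B - A) * (y * z).
  have -> : y - z = (B * z) * y - (A * y) * z by rewrite yA zB !mul1r.
  ring.
have yz_le1 : y * z <= 1 by rewrite /y /z; nra.
have B4A4 : B ^+ 4 - A ^+ 4 = (B - A) * (B ^+ 3 + B ^+ 2 * A + B * A ^+ 2 + A ^+ 3) by ring.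
have sum_ge4 : 4 <= B ^+ 3 + B ^+ 2 * A + B * A ^+ 2 + A ^+ 3 by nra.
have : y - z <= (B ^+ 4 - A ^+ 4) / 4 by rewrite B4A4 yz; nra.
rewrite /y /z; lra.
Qed.

Lemma inv1D_pow4_le w : 0 <= w -> w < 1 -> (1 + w)^-1 ^+ 4 + 8 * w <= (1 - w)^-1 ^+ 4.
Proof.
move=> w_ge0 w_lt1.
set C := (1 + w)^-1; set D := (1 - w)^-1.
have wC : C * (1 + w) = 1 by rewrite mulVf // gt_eqF //; lra.
have wD : D * (1 - w) = 1 by rewrite mulVf // gt_eqF //; lra.
have DC_ge1 : 1 <= D * C.
  have DC : (D * C) * (1 - w ^+ 2) = 1.
    have -> : (D * C) * (1 - w ^+ 2) = (D * (1 - w)) * (C * (1 + w)) by ring.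
    by rewrite wC wD mulr1.
  have : 0 < C by rewrite invr_gt0; lra.
  have : 0 < D by rewrite invr_gt0; lra.
  nra.
have D4C4 : D ^+ 4 - C ^+ 4 = (D * C) ^+ 4 * (8 * w + 8 * w ^+ 3).
  have -> : D ^+ 4 - C ^+ 4 = D ^+ 4 * (C * (1 + w)) ^+ 4 - C ^+ 4 * (D * (1 - w)) ^+ 4.
    by rewrite wC wD !expr1n !mulr1.
  ring.
have : 1 <= (D * C) ^+ 4 by rewrite exprn_ege1.
have : 0 <= w ^+ 3 by rewrite exprn_ge0.
nra.
Qed.

Lemma expR_rem1_le_psi mu u : `|mu| <= u -> u < 4 -> expR mu - 1 - mu <= psi u.
Proof.
move=> mu_le_u u_lt4; have [mu_ge0|mu_lt0] := leP 0 mu.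
  rewrite ger0_norm // in mu_le_u.
  have : expR mu <= (1 - mu / 4)^-1 ^+ 4.
    have -> : expR mu = expR (mu / 4) ^+ 4 by rewrite -expRM_natl; congr expR; field.
    rewrite ler_pXn2r ?nnegrE ?expR_ge0 ?invr_ge0 ?expR_le_inv1B //; lra.
  have := psi_homo mu_ge0 mu_le_u u_lt4.
  rewrite /psi; lra.
rewrite ltr0_norm // in mu_le_u.
set w := - mu / 4.
have : expR mu <= (1 + w)^-1 ^+ 4.
  have -> : expR mu = expR (- w) ^+ 4 by rewrite -expRM_natl /w; congr expR; field.
  rewrite ler_pXn2r ?nnegrE ?expR_ge0 ?invr_ge0 ?expRN_le_inv1D //; rewrite /w; lra.
have := @inv1D_pow4_le w ltac:(rewrite /w; lra) ltac:(rewrite /w; lra).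
have := @psi_homo (- mu) u ltac:(lra) mu_le_u u_lt4.
rewrite /psi /w; lra.
Qed.

Lemma psi_ge0 u : 0 <= u -> u < 4 -> 0 <= psi u.
Proof.
move=> u_ge0 u_lt4; have := @expR_rem1_le_psi 0 u.
by rewrite normr0 expR0; lra.
Qed.

End ExpBounds.

Lemma bernstein_exponent_le (R : realType) (x s : R) : 0 < x -> 0 <= s ->
  x ^+ 2 / (8 * s + 4 * x / 3)
    <= x / (x + 3 * s) * x - s / 2 * psi (x / (x + 3 * s) * 2).
Proof.
move=> x_gt0 s_ge0; rewrite /psi -subr_ge0.
have -> : (1 - x / (x + 3 * s) * 2 / 4)^-1 = 2 * (x + 3 * s) / (x + 6 * s).
  by field; rewrite ?gt_eqF //; lra.
have -> : x / (x + 3 * s) * x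
   - s / 2 * ((2 * (x + 3 * s) / (x + 6 * s)) ^+ 4 - 1 - x / (x + 3 * s) * 2)
   - x ^+ 2 / (8 * s + 4 * x / 3) =
  (2 * x ^+ 7 + 26 * x ^+ 6 * s + 180 * x ^+ 5 * s ^+ 2 + 1368 * x ^+ 4 * s ^+ 3
     + 6912 * x ^+ 3 * s ^+ 4 + 12960 * x ^+ 2 * s ^+ 5)
  / (2 * (x + 3 * s) * (x + 6 * s) ^+ 4 * (24 * s + 4 * x)).
  by field; rewrite ?mulf_neq0 ?expf_neq0 ?gt_eqF //; lra.
have x_ge0 : 0 <= x by lra.
apply: divr_ge0; last by rewrite !mulr_ge0 ?exprn_ge0 //; lra.
by rewrite !addr_ge0 // !mulr_ge0 // exprn_ge0.
Qed.

Lemma bernstein_exponent_bound (R : realType) (x s N S : R) :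
  0 < x -> 0 <= s -> 0 <= N -> 2 * S <= s * N ->
  - (x / (x + 3 * s) * (x * N)) + psi (x / (x + 3 * s) * 2) * S
    <= - (x ^+ 2 * N) / (8 * s + 4 * x / 3).
Proof.
move=> x_gt0 s_ge0 N_ge0 S_le.
have := bernstein_exponent_le x_gt0 s_ge0.
set l := x / (x + 3 * s); set q := x ^+ 2 / _ => q_le.
have l_ge0 : 0 <= l by rewrite divr_ge0 //; lra.
have l_le1 : l <= 1 by rewrite ler_pdivrMr; lra.
have psi_ge0 := @psi_ge0 _ (l * 2) ltac:(lra) ltac:(lra).
have h1 : psi (l * 2) * (2 * S) <= psi (l * 2) * (s * N) by rewrite ler_wpM2l.
have h2 : N * q <= N * (l * x - s / 2 * psi (l * 2)) by rewrite ler_wpM2l.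
have -> : - (x ^+ 2 * N) / (8 * s + 4 * x / 3) = - (N * q) by rewrite /q; field; lra.
lra.
Qed.

Definition bernoulli (R : realType) (q : R) (b : bool) : R := if b then q else 1 - q.

Lemma bernoulli_ge0 (R : realType) (q : R) b : 0 <= q <= 1 -> 0 <= bernoulli q b.
Proof. by case: b => /andP[] /=; lra. Qed.

Lemma sum_bernoulli (R : realType) (q : R) : \sum_b bernoulli q b = 1.
Proof. by rewrite big_bool /=; ring. Qed.

Lemma bernoulli_mgf_le (R : realType) (p mu : R) :
  \sum_b bernoulli p b * expR (mu * (b%:R - p)) <= expR (p * (expR mu - 1 - mu)).
Proof.
rewrite big_bool /=.
have -> : expR (mu * (1 - p)) = expR mu * expR (mu * (0 - p)).
  by rewrite -expRD; congr expR; ring.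
have -> : expR (p * (expR mu - 1 - mu)) = expR (p * (expR mu - 1)) * expR (mu * (0 - p)).
  by rewrite -expRD; congr expR; ring.
have -> : p * (expR mu * expR (mu * (0 - p))) + (1 - p) * expR (mu * (0 - p))
    = (1 + p * (expR mu - 1)) * expR (mu * (0 - p)) by ring.
by rewrite ler_pM2r ?expR_gt0 // expR_ge1Dx.
Qed.

Lemma indicator_gt_le_expR (R : realType) (l t y : R) :
  0 <= l -> (t < y)%R%:R <= expR (l * (y - t)).
Proof.
move=> l_ge0; have [lt_ty|] := ltP t y; last by rewrite expR_ge0.
by apply: le_trans (expR_ge1Dx _); rewrite lerDl mulr_ge0 // subr_ge0 ltW.
Qed.

Section BernoulliProduct.
Variables (R : realType) (T : finType) (p : T -> R).

Definition bernoulli_prod (B : {ffun T -> bool}) : R := \prod_k bernoulli (p k) (B k).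

Lemma sum_bernoulli_prodM (f : T -> bool -> R) :
  \sum_(B : {ffun T -> bool}) \prod_k (bernoulli (p k) (B k) * f k (B k))
    = \prod_k \sum_b bernoulli (p k) b * f k b.
Proof. by rewrite bigA_distr_bigA. Qed.

Lemma sum_bernoulli_prod : \sum_B bernoulli_prod B = 1.
Proof.
transitivity (\sum_(B : {ffun T -> bool}) \prod_k (bernoulli (p k) (B k) * 1)).
  by apply: eq_bigr => B _; apply: eq_bigr => k _; rewrite mulr1.
rewrite (sum_bernoulli_prodM (fun _ _ => 1)); apply: big1 => k _.
by under eq_bigr do rewrite mulr1; exact: sum_bernoulli.
Qed.

Lemma mean_bernoulli_prod k : \sum_B bernoulli_prod B * (B k)%:R = p k.
Proof.
pose f (k' : T) (b : bool) : R := if k' == k then b%:R else 1.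
transitivity (\sum_(B : {ffun T -> bool}) \prod_k' (bernoulli (p k') (B k') * f k' (B k'))).
  apply: eq_bigr => B _; rewrite big_split /=; congr (_ * _).
  by rewrite (bigD1 k) //= /f eqxx big1 ?mulr1 // => k' /negbTE ->.
rewrite (sum_bernoulli_prodM f) (bigD1 k) //= [X in _ * X]big1 ?mulr1.
  by rewrite big_bool /f eqxx /= mulr1 mulr0 addr0.
move=> k' /negbTE k'k.
by under eq_bigr do rewrite /f k'k mulr1; exact: sum_bernoulli.
Qed.

Hypothesis p01 : forall k, 0 <= p k <= 1.

Lemma bernoulli_prod_ge0 B : 0 <= bernoulli_prod B.
Proof. by apply: prodr_ge0 => k _; exact: bernoulli_ge0. Qed.

Lemma bernoulli_prod_tail (c : T -> R) (m l t : R) :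
  (forall k, `|c k| <= m) -> 0 <= l -> l * m < 4 ->
  \sum_B bernoulli_prod B * (t < \sum_k c k * ((B k)%:R - p k))%R%:R
    <= expR (- (l * t) + psi (l * m) * \sum_k p k).
Proof.
move=> c_le_m l_ge0 lm_lt4.
apply: le_trans (_ : \sum_B bernoulli_prod B
    * expR (l * (\sum_k c k * ((B k)%:R - p k) - t)) <= _).
  apply: ler_sum => B _; rewrite ler_wpM2l ?bernoulli_prod_ge0 //.
  exact: indicator_gt_le_expR.
have factorE B : bernoulli_prod B * expR (l * (\sum_k c k * ((B k)%:R - p k) - t))
    = expR (- (l * t)) * \prod_k (bernoulli (p k) (B k) * expR (l * c k * ((B k)%:R - p k))).
  rewrite big_split /= -expR_sum mulrCA -expRD; congr (_ * expR _).
  by rewrite mulrBr mulr_sumr addrC; congr (_ + _); apply: eq_bigr => k _; rewrite mulrA.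
under eq_bigr do rewrite factorE.
rewrite -mulr_sumr (sum_bernoulli_prodM (fun k b => expR (l * c k * (b%:R - p k)))).
rewrite expRD ler_pM2l ?expR_gt0 // mulr_sumr expR_sum.
apply: ler_prod => k _; apply/andP; split.
  by apply: sumr_ge0 => b _; rewrite mulr_ge0 ?expR_ge0 ?bernoulli_ge0.
apply: le_trans (bernoulli_mgf_le _ _) _.
rewrite ler_expR mulrC; apply: ler_wpM2r; first by case/andP: (p01 k).
apply: expR_rem1_le_psi => //.
by rewrite normrM ger0_norm // ler_wpM2l.
Qed.

End BernoulliProduct.

Section UnionBound.
Variables (R : realType) (T : finType) (mass : T -> R).
Hypothesis mass_ge0 : forall w, 0 <= mass w.

Lemma le_prob (E E' : pred T) : (forall w, E w -> E' w) -> prob mass E <= prob mass E'.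
Proof.
move=> EE'; rewrite /prob [X in X <= _]big_mkcond [X in _ <= X]big_mkcond.
apply: ler_sum => w _.
by case Ew: (E w); [rewrite EE' | case: (E' w)].
Qed.

Lemma prob_le_sum (I : finType) (E : pred T) (F : I -> pred T) :
  (forall w, E w -> [exists i, F i w]) -> prob mass E <= \sum_i prob mass (F i).
Proof.
move=> EF; rewrite /prob; apply: le_trans (_ : \sum_w \sum_(i | F i w) mass w <= _).
  rewrite big_mkcond; apply: ler_sum => w _.
  case: ifP => [/EF/existsP[i Fi]|_]; last by rewrite sumr_ge0.
  by rewrite (bigD1 i) //= lerDl sumr_ge0.
by rewrite (exchange_big_dep xpredT).
Qed.

Lemma prob_bigmax_gt (I : finType) (G : I -> T -> R) t : 0 <= t ->
  prob mass (fun w => t < \big[Num.max/0]_i G i w)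
    <= \sum_i prob mass (fun w => t < G i w).
Proof.
move=> t_ge0; apply: prob_le_sum => w t_lt_max.
case: (boolP [exists i, t < G i w]) => // /existsPn t_ge_G.
have : \big[Num.max/0]_i G i w <= t by apply/bigmax_leP; split=> // i _; rewrite leNgt t_ge_G.
by rewrite leNgt t_lt_max.
Qed.

Lemma prob_normr_gt (G : T -> R) t :
  prob mass (fun w => t < `|G w|)
    <= prob mass (fun w => t < G w) + prob mass (fun w => t < - G w).
Proof.
apply: le_trans (_ : \sum_b prob mass (fun w => t < if b then G w else - G w) <= _).
  apply: prob_le_sum => w; rewrite ltr_normr => /orP[lt_tG|lt_tNG]; apply/existsP.
    by exists true.
  by exists false.
by rewrite big_bool.
Qed.

End UnionBound.

Lemma supnorm_ge0 (R : realType) (K : nat) (M : 'I_K -> 'I_K -> R) : 0 <= supnorm M.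
Proof. exact: bigmax_ge_id. Qed.

Lemma le_supnorm (R : realType) (K : nat) (M : 'I_K -> 'I_K -> R) a b :
  `|M a b| <= supnorm M.
Proof.
apply: le_trans (le_bigmax _ (fun a => \big[Num.max/0]_b `|M a b|) a).
exact: le_bigmax.
Qed.

Lemma sum_lt_pairs_le (R : realType) (n : nat) :
  2 * \sum_(k : 'I_n * 'I_n) (k.1 < k.2)%N%:R <= n%:R ^+ 2 :> R.
Proof.
have swap_inj : injective (fun k : 'I_n * 'I_n => (k.2, k.1)) by move=> [? ?] [? ?] [-> ->].
rewrite mulr_natl mulr2n {2}(reindex_inj swap_inj) -big_split /=.
apply: le_trans (_ : \sum_(k : 'I_n * 'I_n) 1 <= _).
  by apply: ler_sum => k _; case: ltngtP; rewrite ?addr0 ?add0r.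
by rewrite sumr_const card_prod card_ord natrM expr2.
Qed.

Section StochasticBlockModel.
Variables (R : realType) (n K : nat) (pi : 'I_K -> R) (P : 'I_K -> 'I_K -> R).
Hypotheses (pi_ge0 : forall a, 0 <= pi a) (pi_sum1 : \sum_a pi a = 1)
  (P_range : forall a b, 0 <= P a b <= 1).

Local Notation labels := {ffun 'I_n -> 'I_K}.

Definition label_mass (z : labels) : R := \prod_i pi (z i).

Definition edge_prob (z : labels) (k : 'I_n * 'I_n) : R :=
  if (k.1 < k.2)%N then P (z k.1) (z k.2) else 0.

Lemma label_mass_ge0 z : 0 <= label_mass z.
Proof. exact: prodr_ge0. Qed.

Lemma sum_label_mass : \sum_z label_mass z = 1.
Proof. by rewrite -(bigA_distr_bigA (fun _ a => pi a)) big1. Qed.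

Lemma edge_prob01 z k : 0 <= edge_prob z k <= 1.
Proof. by rewrite /edge_prob; case: ifP => _; rewrite ?P_range ?lexx ?ler01. Qed.

Lemma sbm_massE z B :
  sbm_mass pi P (z, B) = label_mass z * bernoulli_prod (edge_prob z) B.
Proof.
congr (_ * _); apply: eq_bigr => k _; rewrite /edge_prob /bernoulli.
by case: ifP => _ //; case: (B k); rewrite ?subr0.
Qed.

Lemma sbm_mass_ge0 (w : Omega n K) : 0 <= sbm_mass pi P w.
Proof.
case: w => z B.
by rewrite sbm_massE mulr_ge0 ?label_mass_ge0 ?(bernoulli_prod_ge0 (edge_prob01 z)).
Qed.

Lemma prob_sbmE (E : pred (Omega n K)) : prob (sbm_mass pi P) E
  = \sum_z label_mass z * \sum_B bernoulli_prod (edge_prob z) B * (E (z, B))%:R.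
Proof.
transitivity (\sum_z \sum_B (if E (z, B) then sbm_mass pi P (z, B) else 0)).
  by rewrite /prob big_mkcond pair_bigA; apply: eq_bigr => -[].
apply: eq_bigr => z _; rewrite mulr_sumr; apply: eq_bigr => B _.
by rewrite sbm_massE mulrA; case: (E _); rewrite ?mulr1 ?mulr0.
Qed.

Lemma condexpZ_sbmE z B (X : Omega n K -> R) : label_mass z != 0 ->
  condexpZ (sbm_mass pi P) X (z, B)
    = \sum_B' bernoulli_prod (edge_prob z) B' * X (z, B').
Proof.
have fiberE (F : Omega n K -> R) :
    \sum_(w | w.1 == z) F w = \sum_B' F (z, B').
  transitivity (\sum_z' \sum_B' (if z' == z then F (z', B') else 0)).
    by rewrite big_mkcond pair_bigA; apply: eq_bigr => -[].
  rewrite (bigD1 z) //= eqxx [X in _ + X]big1 ?addr0 // => z' /negbTE z'z.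
  by rewrite big1 // => B' _; rewrite z'z.
move=> mass_neq0; rewrite /condexpZ !fiberE.
under eq_bigr do rewrite sbm_massE -mulrA.
under [X in _ / X]eq_bigr do rewrite sbm_massE.
by rewrite -!mulr_sumr sum_bernoulli_prod mulr1 mulrC mulKf.
Qed.

Definition pair_weight (e : labels) (a b : 'I_K) (k : 'I_n * 'I_n) : R :=
  if (k.1 < k.2)%N then
    ((e k.1 == a) && (e k.2 == b))%:R + ((e k.1 == b) && (e k.2 == a))%:R
  else 0.

Lemma pair_weight_le2 e a b k : `|pair_weight e a b k| <= 2.
Proof.
rewrite /pair_weight; case: ifP => _; rewrite ?normr0 //.
by rewrite ger0_norm ?addr_ge0 // -natrD ler_nat; case: (_ && _); case: (_ && _).
Qed.

Lemma sum_adj (w : Omega n K) (f : 'I_n -> 'I_n -> R) :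
  \sum_i \sum_j adj R w i j * f i j
    = \sum_(i : 'I_n) \sum_(j : 'I_n)
        (if (i < j)%N then (f i j + f j i) * (w.2 (i, j))%:R else 0).
Proof.
transitivity (\sum_(i : 'I_n) \sum_(j : 'I_n)
    ((if (i < j)%N then (w.2 (i, j))%:R * f i j else 0)
     + (if (j < i)%N then (w.2 (j, i))%:R * f i j else 0))).
  apply: eq_bigr => i _; apply: eq_bigr => j _; rewrite /adj.
  by case: ltngtP => _; rewrite ?addr0 ?add0r ?mul0r.
under eq_bigr do rewrite big_split /=.
rewrite big_split /= [X in _ + X]exchange_big -big_split /=.
apply: eq_bigr => i _; rewrite -big_split; apply: eq_bigr => j _ /=.
by case: ifP => _; rewrite ?addr0 // -mulrDr mulrC.
Qed.

Lemma OtildeE e w a b : Otilde R e w a b = \sum_k pair_weight e a b k * (w.2 k)%:R.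
Proof.
transitivity (\sum_(i : 'I_n) \sum_(j : 'I_n) pair_weight e a b (i, j) * (w.2 (i, j))%:R).
  2: by rewrite pair_bigA; apply: eq_bigr => -[].
rewrite /Otilde /Ocount; case: (eqVneq a b) => [<-|neq_ab].
  rewrite eqxx /= mulr_sumr; apply: eq_bigr => i _; rewrite big_mkcond mulr_sumr.
  apply: eq_bigr => j _; rewrite /pair_weight /adj /=.
  by case: ifP => ij; rewrite ?mulr0 ?mul0r // ij; ring.
rewrite /= sum_adj; apply: eq_bigr => i _; apply: eq_bigr => j _.
by rewrite /pair_weight /=; case: ifP => _; rewrite ?mul0r // [(e j == a) && _]andbC.
Qed.

Lemma Otilde_centeredE e z B a b : label_mass z != 0 ->
  Otilde R e (z, B) a b
    - condexpZ (sbm_mass pi P) (fun w => Otilde R e w a b) (z, B)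
  = \sum_k pair_weight e a b k * ((B k)%:R - edge_prob z k).
Proof.
move=> mass_neq0; rewrite condexpZ_sbmE //= OtildeE.
under eq_bigr do rewrite OtildeE mulr_sumr.
rewrite exchange_big -sumrB; apply: eq_bigr => k _ /=.
under eq_bigr do rewrite mulrCA.
by rewrite -mulr_sumr mean_bernoulli_prod mulrBr.
Qed.

Lemma sum_edge_prob_le z :
  2 * \sum_k edge_prob z k <= supnorm P * n%:R ^+ 2.
Proof.
apply: le_trans (_ : 2 * (supnorm P * \sum_(k : 'I_n * 'I_n) (k.1 < k.2)%N%:R) <= _).
  rewrite ler_pM2l // mulr_sumr; apply: ler_sum => k _; rewrite /edge_prob.
  case: ifP => _; rewrite ?mulr1 ?mulr0 //.
  exact: le_trans (ler_norm _) (le_supnorm _ _ _).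
by rewrite mulrCA ler_wpM2l ?supnorm_ge0 ?sum_lt_pairs_le.
Qed.

Lemma prob_sbm_deviation_gt (x sg : R) (e : labels) (a b : 'I_K) :
  0 < x -> `|sg| <= 1 ->
  prob (sbm_mass pi P) (fun w => x * n%:R ^+ 2
    < sg * (Otilde R e w a b - condexpZ (sbm_mass pi P) (fun w' => Otilde R e w' a b) w))
  <= expR (- (x ^+ 2 * n%:R ^+ 2) / (8 * supnorm P + 4 * x / 3)).
Proof.
move=> x_gt0; set s := supnorm P; set l := x / (x + 3 * s).
have s_ge0 : 0 <= s := supnorm_ge0 P.
have l_ge0 : 0 <= l by rewrite divr_ge0 //; lra.
have l_le1 : l <= 1 by rewrite ler_pdivrMr; lra.
have l2_lt4 : l * 2 < 4 by lra.
move=> sg_le1; rewrite prob_sbmE; set bound := expR _.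
apply: le_trans (_ : \sum_z label_mass z * bound <= _).
  2: by rewrite -mulr_suml sum_label_mass mul1r.
apply: ler_sum => z _; have [->|mass_neq0] := eqVneq (label_mass z) 0.
  by rewrite !mul0r.
rewrite ler_wpM2l ?label_mass_ge0 //.
have deviationE B : sg * (Otilde R e (z, B) a b
    - condexpZ (sbm_mass pi P) (fun w' => Otilde R e w' a b) (z, B))
  = \sum_k (sg * pair_weight e a b k) * ((B k)%:R - edge_prob z k).
  by rewrite Otilde_centeredE // mulr_sumr; apply: eq_bigr => k _; rewrite mulrA.
under eq_bigr do rewrite deviationE.
apply: le_trans (bernoulli_prod_tail (edge_prob01 z) _ _ l_ge0 l2_lt4) _.
  by move=> k; rewrite normrM -[2]mul1r ler_pM ?normr_ge0 ?pair_weight_le2.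
rewrite ler_expR bernstein_exponent_bound ?exprn_ge0 ?sum_edge_prob_le //.
Qed.

Lemma prob_sbm_deviation_normr_gt (x : R) (e : labels) (a b : 'I_K) :
  0 < x ->
  prob (sbm_mass pi P) (fun w => x * n%:R ^+ 2
    < `|Otilde R e w a b - condexpZ (sbm_mass pi P) (fun w' => Otilde R e w' a b) w|)
  <= 2 * expR (- (x ^+ 2 * n%:R ^+ 2) / (8 * supnorm P + 4 * x / 3)).
Proof.
move=> x_gt0; apply: le_trans (prob_normr_gt sbm_mass_ge0 _ _) _.
rewrite mulr_natl mulr2n; apply: lerD.
  apply: le_trans (le_prob sbm_mass_ge0 _) (prob_sbm_deviation_gt (sg := 1) e a b x_gt0 _) => [w|].
    by rewrite mul1r.
  by rewrite normr1.
apply: le_trans (le_prob sbm_mass_ge0 _) (prob_sbm_deviation_gt (sg := -1) e a b x_gt0 _) => [w|].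
  by rewrite mulN1r.
by rewrite normrN normr1.
Qed.

End StochasticBlockModel.

Theorem lemmaA2 (R : realType) (n K : nat) (pi : 'I_K -> R) (P : 'I_K -> 'I_K -> R)
  (pi_ge0 : forall a, 0 <= pi a) (pi_sum1 : \sum_(a : 'I_K) pi a = 1)
  (P_sym : forall a b, P a b = P b a)
  (P_range : forall a b, 0 <= P a b <= 1)
  (x : R) (x_gt0 : 0 < x) :
  prob (@sbm_mass R n K pi P)
    (fun w => \big[Num.max/0]_(e : {ffun 'I_n -> 'I_K})
                 supnorm (fun a b => Otilde R e w a b
                     - condexpZ (@sbm_mass R n K pi P) (fun w' => Otilde R e w' a b) w)
              > x * (n%:R) ^+ 2)
  <= 2 * (K%:R) ^+ (n + 2)
       * expR (- (x ^+ 2 * (n%:R) ^+ 2) / (8 * supnorm P + 4 * x / 3)).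
Proof.
set t := x * n%:R ^+ 2.
set bound := expR (- (x ^+ 2 * n%:R ^+ 2) / (8 * supnorm P + 4 * x / 3)).
have t_ge0 : 0 <= t by rewrite mulr_ge0 ?exprn_ge0 ?ler0n // ltW.
have mass_ge0 (w : Omega n K) : 0 <= sbm_mass pi P w := sbm_mass_ge0 pi_ge0 P_range w.
apply: le_trans (prob_bigmax_gt mass_ge0 _ t_ge0) _.
apply: le_trans (_ : \sum_(e : {ffun 'I_n -> 'I_K}) \sum_(a : 'I_K) \sum_(b : 'I_K)
    2 * bound <= _).
  apply: ler_sum => e _; apply: le_trans (prob_bigmax_gt mass_ge0 _ t_ge0) _.
  apply: ler_sum => a _; apply: le_trans (prob_bigmax_gt mass_ge0 _ t_ge0) _.
  apply: ler_sum => b _; exact: prob_sbm_deviation_normr_gt.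
rewrite !sumr_const card_ffun !card_ord -!mulrnA.
have -> : (K * (K * K ^ n) = K ^ (n + 2))%N by rewrite expnD mulnA mulnn mulnC.
by rewrite -(mulr_natr (2 * bound)) natrX mulrAC.
Qed.
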